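(* Let $k\ge2$, let $f:(k+1)^V\to\mathbb{R}_{\ge0}$ be non-negative, monotone and $k$-submodular with multilinear extension $F$, and let $OPT=\max_{S\in(k+1)^V}f(S)$. Run the meta-framework with $\delta=1/N$ where, at every iteration $t$ and for every $i\in[n]$, $v_{i,j_i(t)}(t)=1$ and $v_{i,j}(t)=0$ for $j\neq j_i(t)$, with $j_i(t)\in\arg\max_{j\in[k]}\frac{\partial F}{\partial x_{i,j}}(s(t))$ (ties broken arbitrarily). Then $s(N)\in\mathcal P$, in fact $\sum_{j}s_{i,j}(N)=1$ for every $i$, and for every $\varepsilon>0$ there is $N_0$ such that for all $N\ge N_0$, $F(s(N))\ge\frac12 OPT-\varepsilon$.
   Context: Let $V=[n]=\{1,\dots,n\}$ and let $k\ge 1$ be an integer. Write $(k+1)^V$ for the set of $k$-tuples $S=(S_1,\dots,S_k)$ of pairwise disjoint subsets of $V$. For $S,T\in(k+1)^V$ let $S\sqcap T=(S_1\cap T_1,\dots,S_k\cap T_k)$ and let $S\sqcup T$ be the tuple whose $j$-th component is $(S_j\cup T_j)\setminus\bigcup_{l\neq j}(S_l\cup T_l)$. A function $f:(k+1)^V\to\mathbb{R}$ is $k$-submodular if $f(S)+f(T)\ge f(S\sqcap T)+f(S\sqcup T)$ for all $S,T\in(k+1)^V$. Write $S\preceq T$ if $S_j\subseteq T_j$ for all $j$; $f$ is monotone if $S\preceq T$ implies $f(S)\le f(T)$. Let $\mathcal P=\{x\in[0,1]^{n\times k}:\sum_{j=1}^k x_{i,j}\le 1\ \forall i\in[n]\}$.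 The multilinear extension of $f$ is the polynomial $F(x)=\sum_{S\in(k+1)^V} f(S_1,\dots,S_k)\Big(\prod_{j\in[k]}\prod_{i\in S_j}x_{i,j}\Big)\prod_{i\in V\setminus\bigcup_j S_j}\Big(1-\sum_{j=1}^k x_{i,j}\Big)$, considered on $\mathcal P$. Meta-framework: fix a positive integer $N$ and $\delta=1/N$. Set $s(0)=0\in\mathbb{R}^{n\times k}$. For $t=0,1,\dots,N-1$, choose a direction $v(t)\in[0,1]^{n\times k}$ with $\sum_{j=1}^k v_{i,j}(t)=1$ for every $i\in[n]$, and set $s(t+1)=s(t)+\delta\,v(t)$. The output is $s(N)$. *)

From mathcomp Require Import all_boot all_order all_algebra.
From mathcomp Require Import all_classical all_reals all_analysis.
Set Implicit Arguments. Unset Strict Implicit. Unset Printing Implicit Defensive.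
Import Order.TTheory GRing.Theory Num.Theory.
Local Open Scope ring_scope.

(* (k+1)^V with V = 'I_n : k-tuples (S_1,...,S_k) of pairwise disjoint
   subsets of V (components indexed by 'I_k, i.e. j = 0..k-1). *)
Definition raw_ktuple (n k : nat) := {ffun 'I_k -> {set 'I_n}}.

Definition pdisj (n k : nat) (S : raw_ktuple n k) : bool :=
  [forall j1 : 'I_k, forall j2 : 'I_k, (j1 != j2) ==> [disjoint S j1 & S j2]].

Definition ktuple (n k : nat) := {S : raw_ktuple n k | pdisj S}.

Definition kmeet (n k : nat) (S T : raw_ktuple n k) : raw_ktuple n k :=
  [ffun j => S j :&: T j].

Definition kjoin (n k : nat) (S T : raw_ktuple n k) : raw_ktuple n k :=
  [ffun j => (S j :|: T j) :\: \bigcup_(l | l != j) (S l :|: T l)].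

(* Since ⊓ and ⊔ of
   elements of (k+1)^V are again in (k+1)^V, we quantify over the elements
   U, W of (k+1)^V whose underlying tuples are S ⊓ T and S ⊔ T. *)
Definition k_submodular (R : realType) (n k : nat) (f : ktuple n k -> R) :=
  forall S T U W : ktuple n k,
    val U = kmeet (val S) (val T) -> val W = kjoin (val S) (val T) ->
    f U + f W <= f S + f T.

Definition kle (n k : nat) (S T : ktuple n k) : bool :=
  [forall j : 'I_k, val S j \subset val T j].

Definition k_monotone (R : realType) (n k : nat) (f : ktuple n k -> R) :=
  forall S T : ktuple n k, kle S T -> f S <= f T.

(* OPT = max_S f(S)  (f is non-negative, so 0 is a neutral start value) *)
Definition OPT (R : realType) (n k : nat) (f : ktuple n k -> R) : R :=
  \big[Num.max/0]_(S : ktuple n k) f S.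

Definition multilinear_ext (R : realType) (n k : nat) (f : ktuple n k -> R)
    (x : 'M[R]_(n, k)) : R :=
  \sum_(S : ktuple n k)
     f S * (\prod_(j < k) \prod_(i in val S j) x i j)
         * \prod_(i in ~: \bigcup_(j < k) val S j) (1 - \sum_(j < k) x i j).

Definition in_P (R : realType) (n k : nat) (x : 'M[R]_(n, k)) : Prop :=
  (forall i j, 0 <= x i j <= 1) /\ (forall i, \sum_(j < k) x i j <= 1).

(* A run of the meta-framework with delta = 1/N and the greedy direction:
   s t is s(t); jsel t i is the chosen j_i(t), an argmax over j of the
   partial derivative dF/dx_{i,j}(s(t)) (directional derivative of F at s(t)
   along the unit matrix e_{i,j}); ties broken arbitrarily (any choice). *)
Definition greedy_run (R : realType) (n k : nat) (F : 'M[R]_(n, k) -> R)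
    (N : nat) (s : nat -> 'M[R]_(n, k)) (jsel : nat -> 'I_n -> 'I_k) : Prop :=
  [/\ s 0%N = 0,
      (forall t, (t < N)%N -> forall i (j : 'I_k),
          'D_(delta_mx i j) F (s t) <= 'D_(delta_mx i (jsel t i)) F (s t)) &
      (forall t, (t < N)%N ->
          s t.+1 = s t + N%:R^-1 *: \matrix_(i < n, j < k) ((j == jsel t i)%:R : R))].

From mathcomp Require Import all_boot all_order all_algebra.
From mathcomp Require Import all_classical all_reals all_analysis.
From mathcomp Require Import ring lra.
Import Order.TTheory GRing.Theory Num.Theory.
Local Open Scope ring_scope.
Set Implicit Arguments. Unset Strict Implicit.

(* An element of (k+1)^V is encoded by an assignment [a : V -> option [k]]
   (item [i] lies in component [j], or in none).  In these coordinates the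
   multilinear extension reads F(x) = sum_a g(a) W_x(a), where W_x(a) is the
   product of the row weights x_{i,a(i)} (resp. 1 - sum_j x_{i,j}); on the
   polytope P these weights form a probability distribution.  F is affine
   along every coordinate e_{ij}, with slope the multilinear extension of
   the discrete derivative g(a[i:=j]) - g(a[i:=none]); this identifies the
   partial derivatives.  Telescoping through the cells then shows: slopes
   are nonnegative (monotonicity), antitone (k-submodularity) and
   2B-Lipschitz when 0 <= g <= B.

   The greedy run s(t) is compared with y(t) = s(t) + (1 - t/N) o, [o] the
   point of an optimal solution: in one step y loses at most what s gains,
   up to O(B n^2 / N^2).  Summing the N steps gives
   2 F(s(N)) >= OPT + F(0) - 2 OPT n^2 / N, and the theorem follows. *)

Section Multilinear.
Variables (R : realType) (n k : nat).

Definition asg := {ffun 'I_n -> option 'I_k}.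

Definition upd (a : asg) (i : 'I_n) (b : option 'I_k) : asg :=
  [ffun m => if m == i then b else a m].

Lemma upd_at a i b : upd a i b i = b.
Proof. by rewrite ffunE eqxx. Qed.

Lemma upd_ne a i b m : m != i -> upd a i b m = a m.
Proof. by move=> /negPf mi; rewrite ffunE mi. Qed.

Lemma upd_upd a i b c : upd (upd a i b) i c = upd a i c.
Proof. by apply/ffunP=> m; rewrite !ffunE; case: eqP. Qed.

Lemma upd_id a i : upd a i (a i) = a.
Proof. by apply/ffunP=> m; rewrite !ffunE; case: eqP => // ->. Qed.

Lemma sum_delta (j : 'I_k) : \sum_l ((l == j)%:R : R) = 1.
Proof. by rewrite (bigD1 j) //= eqxx big1 ?addr0 // => l /negPf ->. Qed.

Lemma sum_option (F : option 'I_k -> R) :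
  \sum_b F b = F None + \sum_j F (Some j).
Proof.
rewrite (bigD1 None) //=; congr (_ + _).
rewrite (reindex_omap Some (fun b => b)) /=; last by case.
by apply: eq_bigl => j; rewrite eqxx.
Qed.

Definition wt (x : 'M[R]_(n, k)) m (b : option 'I_k) : R :=
  if b is Some j then x m j else 1 - \sum_j x m j.

Definition Wt x (a : asg) : R := \prod_m wt x m (a m).

Definition ML (g : asg -> R) x : R := \sum_a g a * Wt x a.

Definition Md i j (g : asg -> R) : asg -> R :=
  fun a => g (upd a i (Some j)) - g (upd a i None).

Lemma sum_wt x m : \sum_b wt x m b = 1.
Proof. by rewrite sum_option /= subrK. Qed.

Lemma sum_Wt x : \sum_a Wt x a = 1.
Proof.
rewrite /Wt -(bigA_distr_bigA (fun m b => wt x m b)).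
by rewrite big1 // => m _; rewrite sum_wt.
Qed.

(* The polytope P: nonnegative entries and row sums at most one (the bound
   [x i j <= 1] of [in_P] follows). *)
Definition in_Q (x : 'M[R]_(n, k)) :=
  (forall i j, 0 <= x i j) /\ (forall i, \sum_j x i j <= 1).

Lemma in_QP x : in_Q x -> in_P x.
Proof.
move=> [x0 x1]; split => // i j; rewrite x0 /=.
apply: le_trans (x1 i); rewrite (bigD1 j) //= lerDl.
by apply: sumr_ge0 => l _.
Qed.

Lemma Wt_ge0 x a : in_Q x -> 0 <= Wt x a.
Proof.
move=> [x0 x1]; apply: prodr_ge0 => m _; case: (a m) => [j|] /=.
  exact: x0.
by rewrite subr_ge0.
Qed.

(* On P the weights form a probability distribution, so [ML g] is an
   average of values of [g]. *)
Lemma ML_ub g c x : in_Q x -> (forall a, g a <= c) -> ML g x <= c.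
Proof.
move=> hx hg; rewrite -[c]mulr1 -(sum_Wt x) mulr_sumr.
by apply: ler_sum => a _; apply: ler_wpM2r; [apply: Wt_ge0|].
Qed.

Lemma ML_lb g c x : in_Q x -> (forall a, c <= g a) -> c <= ML g x.
Proof.
move=> hx hg; rewrite -[c]mulr1 -(sum_Wt x) mulr_sumr.
by apply: ler_sum => a _; apply: ler_wpM2r; [apply: Wt_ge0|].
Qed.

(* Negation commutes with [ML] and [Md]; this turns upper bounds on
   slopes into lower bounds. *)
Lemma ML_opp g x : ML (fun a => - g a) x = - ML g x.
Proof. by rewrite /ML -sumrN; apply: eq_bigr => a _; rewrite mulNr. Qed.

Lemma Md_opp i j g : Md i j (fun a => - g a) = (fun a => - Md i j g a).
Proof. by apply: funext => a; rewrite /Md; ring. Qed.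

Lemma sum_fiber i b (K : asg -> R) :
  \sum_(a : asg | a i == b) K a = \sum_(a : asg | a i == None) K (upd a i b).
Proof.
rewrite (reindex_onto (fun a => upd a i b) (fun a => upd a i None)) /=; last first.
  by move=> a /eqP <-; rewrite upd_upd upd_id.
apply: eq_bigl => a; rewrite upd_at eqxx upd_upd /=.
apply/eqP/eqP => [<-|ai]; first by rewrite upd_at.
by rewrite -ai upd_id.
Qed.

Definition Pm x (a : asg) i : R := \prod_(m | m != i) wt x m (a m).

Lemma Wt_split x a i : Wt x a = wt x i (a i) * Pm x a i.
Proof. by rewrite /Wt (bigD1 i). Qed.

Lemma Pm_upd x a i b : Pm x (upd a i b) i = Pm x a i.
Proof. by apply: eq_bigr => m mi; rewrite upd_ne. Qed.

(* The coefficient of [wt x i b] in [ML g x] is the multilinear extension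
   of [g] with [i] forced to [b]. *)
Lemma sum_slice x g i b :
  \sum_(a : asg) (a i == b)%:R * (g a * Pm x a i) = \sum_a g (upd a i b) * Wt x a.
Proof.
have -> : \sum_(a : asg) (a i == b)%:R * (g a * Pm x a i) =
          \sum_(a : asg | a i == b) g a * Pm x a i.
  by rewrite [RHS]big_mkcond; apply: eq_bigr => a _; case: eqP; rewrite ?mul1r ?mul0r.
rewrite sum_fiber [RHS](partition_big (fun a : asg => a i) xpredT) //=.
rewrite -[LHS]mul1r -(sum_wt x i) mulr_suml; apply: eq_bigr => c _.
rewrite [RHS]sum_fiber mulr_sumr; apply: eq_bigr => a _.
by rewrite upd_upd (Wt_split _ _ i) upd_at !Pm_upd mulrCA.
Qed.

Lemma wt_shift x h i j b :
  wt (x + h *: delta_mx i j) i b =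
  wt x i b + h * ((b == Some j)%:R - (b == None)%:R).
Proof.
case: b => [l|] /=; first by rewrite !mxE eqxx /= subr0 mulrC.
have -> : \sum_l (x + h *: delta_mx i j) i l = \sum_l x i l + h.
  under eq_bigr do rewrite !mxE eqxx /=.
  by rewrite big_split /= -mulr_sumr sum_delta mulr1.
by rewrite sub0r mulrN1 opprD addrA.
Qed.

Lemma Pm_shift x h i j a : Pm (x + h *: delta_mx i j) a i = Pm x a i.
Proof.
have row_m m l : m != i -> (x + h *: delta_mx i j) m l = x m l.
  by move=> /negPf mi; rewrite !mxE mi /= mulr0 addr0.
apply: eq_bigr => m mi; rewrite /wt; case: (a m) => [l|]; first exact: row_m.
by congr (_ - _); apply: eq_bigr => l _; apply: row_m.
Qed.

Lemma ML_shift g x h i j :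
  ML g (x + h *: delta_mx i j) = ML g x + h * ML (Md i j g) x.
Proof.
rewrite /ML /Md.
have -> : \sum_a g a * Wt (x + h *: delta_mx i j) a =
   \sum_a g a * Wt x a + h * (\sum_(a : asg) (a i == Some j)%:R * (g a * Pm x a i)
                          - \sum_(a : asg) (a i == None)%:R * (g a * Pm x a i)).
  rewrite -sumrB mulr_sumr -big_split /=; apply: eq_bigr => a _.
  rewrite !(Wt_split _ a i) Pm_shift wt_shift; ring.
by rewrite !sum_slice -sumrB; congr (_ + h * _); apply: eq_bigr => a _; rewrite mulrBl.
Qed.

Lemma D_ML g i j x : 'D_(delta_mx i j) (ML g) x = ML (Md i j g) x.
Proof.
rewrite /derive; apply: lim_near_cst; first exact: norm_hausdorff.
apply: filterS (nbhs_dnbhs_neq 0) => h h0.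
rewrite /= [_ + x]addrC ML_shift addrC addKr.
by rewrite /GRing.scale /= mulKf.
Qed.
End Multilinear.

Section Increments.
Variables (R : realType) (n k : nat).

Definition mle (A B : 'M[R]_(n, k)) := forall i j, A i j <= B i j.

Lemma mle_refl A : mle A A. Proof. by move=> i j. Qed.

Lemma mle_trans A B C : mle A B -> mle B C -> mle A C.
Proof. by move=> AB BC i j; apply: le_trans (AB i j) (BC i j). Qed.

Lemma mle_addr A D : mle 0 D -> mle A (A + D).
Proof. by move=> D0 i j; rewrite mxE lerDl; have := D0 i j; rewrite mxE. Qed.

Lemma mle_subr A B : mle A B -> mle 0 (B - A).
Proof. by move=> AB i j; rewrite !mxE subr_ge0. Qed.

Lemma in_Q_box x y z : mle 0 x -> mle x y -> mle y z -> in_Q z -> in_Q y.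
Proof.
move=> x0 xy yz [_ z1]; split=> [i j|i].
  by apply: le_trans (xy i j); have := x0 i j; rewrite mxE.
by apply: le_trans (z1 i); apply: ler_sum => j _; apply: yz.
Qed.

Definition cell := ('I_n * 'I_k)%type.

(* Going from [x] to [x + D] (D >= 0) one cell at a time, [ML g] grows by at
   most [D p * U p] at the cell [p] when [U] bounds the slopes of [ML g] on
   the box between [x] and [x + D]. *)
Lemma ML_incr_le (g : asg n k -> R) (U : cell -> R) x D : mle 0 D ->
  (forall p y, mle x y -> mle y (x + D) -> ML (Md p.1 p.2 g) y <= U p) ->
  ML g (x + D) <= ML g x + \sum_(p : cell) D p.1 p.2 * U p.
Proof.
move=> D0 hU.
pose part L := \sum_(p <- L) D p.1 p.2 *: delta_mx p.1 p.2 : 'M[R]_(n, k).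
have part_ge0 L : mle 0 (part L).
  move=> i j; rewrite /part summxE mxE; apply: sumr_ge0 => p _.
  by rewrite !mxE; apply: mulr_ge0; [have := D0 p.1 p.2; rewrite mxE|case: (_ && _)].
have partD : part (index_enum cell) = D.
  by rewrite [RHS]matrix_sum_delta pair_bigA.
have path L y : mle x y -> mle (y + part L) (x + D) ->
    ML g (y + part L) <= ML g y + \sum_(p <- L) D p.1 p.2 * U p.
  elim: L y => [|p L IH] y xy; first by rewrite /part !big_nil !addr0.
  have -> : part (p :: L) = D p.1 p.2 *: delta_mx p.1 p.2 + part L.
    by rewrite /part big_cons.
  rewrite addrA big_cons => yD.
  have yy : mle y (y + D p.1 p.2 *: delta_mx p.1 p.2).
    by apply: mle_addr; have := part_ge0 [:: p]; rewrite /part big_seq1.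
  apply: le_trans (IH _ (mle_trans xy yy) yD) _.
  rewrite ML_shift -addrA lerD2l lerD2r ler_wpM2l //.
    by have := D0 p.1 p.2; rewrite mxE.
  apply: hU xy (mle_trans _ yD).
  by apply: mle_trans yy _; apply: mle_addr.
by have := path (index_enum cell) x (mle_refl x); rewrite partD; apply; apply: mle_refl.
Qed.

Lemma ML_incr_ge (g : asg n k -> R) (U : cell -> R) x D : mle 0 D ->
  (forall p y, mle x y -> mle y (x + D) -> U p <= ML (Md p.1 p.2 g) y) ->
  ML g x + \sum_(p : cell) D p.1 p.2 * U p <= ML g (x + D).
Proof.
move=> D0 hU; have := @ML_incr_le (fun a => - g a) (fun p => - U p) x D D0.
rewrite !ML_opp; under eq_bigr do rewrite mulrN; rewrite sumrN.
rewrite lerNl opprD !opprK; apply.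
by move=> p y xy yD; rewrite Md_opp ML_opp lerN2; apply: hU.
Qed.
End Increments.

Section Encoding.
Variables (n k : nat).

Definition tup_raw (a : asg n k) : raw_ktuple n k :=
  [ffun j => [set i | a i == Some j]].

Lemma tup_pdisj a : pdisj (tup_raw a).
Proof.
apply/forallP => j1; apply/forallP => j2; apply/implyP => j12.
apply/pred0P => i /=; rewrite !ffunE !inE.
case: (eqVneq (a i) (Some j1)) => //= ->.
by apply/negP => /eqP [] e; rewrite e eqxx in j12.
Qed.

Definition tup (a : asg n k) : ktuple n k := exist _ (tup_raw a) (tup_pdisj a).

(* Conversely, the assignment of a k-tuple (components are disjoint, so each
   item lies in at most one of them). *)
Definition asn (S : ktuple n k) : asg n k := [ffun i => [pick j | i \in val S j]].

Lemma tupK : cancel tup asn.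
Proof.
move=> a; apply/ffunP => i; rewrite ffunE /=.
case: pickP => [j|none]; first by rewrite ffunE inE => /eqP.
case ai: (a i) => [j|] //.
by have := none j; rewrite ffunE inE ai eqxx.
Qed.

Lemma asnK : cancel asn tup.
Proof.
case=> S hS; apply/val_inj => /=; apply/ffunP => j; rewrite ffunE.
apply/setP => i; rewrite inE ffunE /=.
case: pickP => [j' ij'|none]; last by rewrite (none j).
apply/idP/idP => [/eqP [] <- //|ij].
case: (eqVneq j' j) => [->//|j'j].
move/forallP: hS => /(_ j') /forallP /(_ j) /implyP /(_ j'j).
by move/pred0P => /(_ i) /=; rewrite ij' ij.
Qed.

Lemma tup_meet (u v : asg n k) :
  kmeet (val (tup u)) (val (tup v)) =
  val (tup [ffun m => if u m == v m then u m else None]).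
Proof.
apply/ffunP => j; rewrite !ffunE; apply/setP => m; rewrite !inE !ffunE.
case: (eqVneq (u m) (v m)) => [->|uv]; first by rewrite andbb.
apply/negbTE/negP => /andP [/eqP um /eqP vm].
by rewrite um vm eqxx in uv.
Qed.

Lemma tup_join (u v : asg n k) : (forall m, u m = None \/ v m = None \/ u m = v m) ->
  kjoin (val (tup u)) (val (tup v)) =
  val (tup [ffun m => if u m is Some _ then u m else v m]).
Proof.
move=> uv; apply/ffunP => j; rewrite !ffunE; apply/setP => m.
set w := [ffun m => if u m is Some _ then u m else v m].
have inUV l :
    (m \in [set i | u i == Some l] :|: [set i | v i == Some l]) = (w m == Some l).
  rewrite !inE /w ffunE.
  case: (uv m) => [->|[->|->]] /=.
  - by case: (v m).
  - by case: (u m) => [z|] //=; rewrite orbF.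
  - by rewrite orbb; case: (v m).
rewrite finset.in_setD inUV inE.
case: (eqVneq (w m) (Some j)) => [wm|]; last by rewrite andbF.
rewrite andbT; apply/negP => /bigcupP [l lj]; rewrite !ffunE inUV wm => /eqP [] e.
by rewrite e eqxx in lj.
Qed.
End Encoding.

Section SetFunction.
Variables (R : realType) (n k : nat) (f : ktuple n k -> R).

Definition gf (a : asg n k) : R := f (tup a).

Lemma prod_tup (x : 'M[R]_(n, k)) (a : asg n k) :
  (\prod_(j < k) \prod_(i in val (tup a) j) x i j)
   * \prod_(i in ~: \bigcup_(j < k) val (tup a) j) (1 - \sum_(j < k) x i j)
  = Wt x a.
Proof.
have -> : \prod_(j < k) \prod_(i in val (tup a) j) x i j =
          \prod_i (if a i is Some j then x i j else 1).
  transitivity (\prod_(j < k) \prod_i (if a i == Some j then x i j else 1)).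
    apply: eq_bigr => j _; rewrite big_mkcond; apply: eq_bigr => i _.
    by rewrite /= ffunE inE.
  rewrite exchange_big; apply: eq_bigr => i _.
  case: (a i) => [j|]; last by rewrite big1.
  rewrite (bigD1 j) //= eqxx big1 ?mulr1 // => l lj.
  by case: eqP => // -[] jl; rewrite jl eqxx in lj.
have -> : \prod_(i in ~: \bigcup_(j < k) val (tup a) j) (1 - \sum_(j < k) x i j) =
          \prod_i (if a i is None then 1 - \sum_(j < k) x i j else 1).
  rewrite big_mkcond; apply: eq_bigr => i _; rewrite inE.
  have -> : (i \in \bigcup_(j < k) val (tup a) j) = (a i != None).
    apply/bigcupP/idP => [[j _]|]; first by rewrite /= ffunE inE => /eqP ->.
    by case ai: (a i) => [j|] // _; exists j => //; rewrite /= ffunE inE ai.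
  by rewrite negbK; case: (a i).
rewrite -big_split; apply: eq_bigr => i _ /=.
by case: (a i) => [j|] /=; rewrite ?mulr1 ?mul1r.
Qed.

Lemma ML_eq : multilinear_ext f = ML gf.
Proof.
apply: funext => x.
rewrite /multilinear_ext /ML (reindex (@tup n k)) /=; last first.
  by exists (@asn n k) => b _; [rewrite tupK | rewrite asnK].
by apply: eq_bigr => a _; rewrite -mulrA prod_tup.
Qed.

Lemma gf_mono : k_monotone f -> forall i j a, 0 <= Md i j gf a.
Proof.
move=> hm i j a; rewrite /Md subr_ge0; apply: hm.
apply/forallP => l; apply/fintype.subsetP => m; rewrite !ffunE !inE !ffunE.
by case: (m == i).
Qed.

(* For [r != i]
   this is the k-submodular inequality for the two tuples obtained from [a]
   by moving [i] into [j] and [r] into [l] respectively. *)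
Lemma gf_DR : k_submodular f -> forall i j r l a, Md r l (Md i j gf) a <= 0.
Proof.
move=> hs i j r l a; rewrite /Md.
have [->|ri] := eqVneq r i; first by rewrite !upd_upd subrr.
have ir : i != r by rewrite eq_sym.
pose ext c d := upd (upd a r c) i d.
have extE c d m : ext c d m = if m == i then d else if m == r then c else a m.
  by rewrite !ffunE.
have meet : val (tup (ext None None)) =
            kmeet (val (tup (ext None (Some j)))) (val (tup (ext (Some l) None))).
  rewrite tup_meet; congr (val (tup _)); apply/ffunP => m; rewrite [RHS]ffunE !extE.
  by case: (eqVneq m i) => // _; case: (eqVneq m r) => // _; rewrite eqxx.
have join : val (tup (ext (Some l) (Some j))) =
            kjoin (val (tup (ext None (Some j)))) (val (tup (ext (Some l) None))).
  rewrite tup_join; last first.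
    move=> m; rewrite !extE; case: (eqVneq m i) => _; first by right; left.
    by case: (eqVneq m r) => _; [left|right; right].
  congr (val (tup _)); apply/ffunP => m; rewrite [RHS]ffunE !extE.
  by case: (eqVneq m i) => // _; case: (eqVneq m r) => // _; case: (a m).
have := hs _ _ _ _ meet join; rewrite /gf /ext; lra.
Qed.

Lemma gf_le_OPT a : gf a <= OPT f.
Proof. by rewrite /gf /OPT (bigD1 (tup a)) //= le_max lexx. Qed.

Lemma OPT_attained : (forall S, 0 <= f S) -> exists o, OPT f <= gf o.
Proof.
move=> f0; rewrite /OPT.
apply: (big_ind (fun x => exists o, x <= gf o)).
- by exists ([ffun=> None] : asg n k); apply: f0.
- move=> x1 x2 [w1 h1] [w2 h2].
  have [le12|lt21] := leP (gf w1) (gf w2).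
    by exists w2; rewrite ge_max h2 (le_trans h1 le12).
  by exists w1; rewrite ge_max h1 (le_trans h2 (ltW lt21)).
- by move=> S _; exists (asn S); rewrite /gf asnK.
Qed.
End SetFunction.

Section Directions.
Variables (R : realType) (n k : nat).

Definition Vm (jt : 'I_n -> 'I_k) : 'M[R]_(n, k) :=
  \matrix_(i < n, j < k) ((j == jt i)%:R : R).

Definition Om (o : asg n k) : 'M[R]_(n, k) :=
  \matrix_(i < n, j < k) ((o i == Some j)%:R : R).

Lemma mle_scale (a : R) (D : 'M[R]_(n, k)) : 0 <= a -> mle 0 D -> mle 0 (a *: D).
Proof.
move=> a0 D0 i j; rewrite !mxE mulr_ge0 //.
by have := D0 i j; rewrite mxE.
Qed.

Lemma Vm_ge0 jt : mle 0 (Vm jt).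
Proof. by move=> i j; rewrite !mxE; case: (_ == _). Qed.

Lemma Om_ge0 o : mle 0 (Om o).
Proof. by move=> i j; rewrite !mxE; case: (_ == _). Qed.

Lemma row_sum_lin (x D : 'M[R]_(n, k)) (a : R) i :
  \sum_j (x + a *: D) i j = \sum_j x i j + a * \sum_j D i j.
Proof. by rewrite mulr_sumr -big_split; apply: eq_bigr => j _; rewrite !mxE. Qed.

Lemma Vm_row jt i : \sum_j Vm jt i j = 1.
Proof. by under eq_bigr do rewrite mxE; apply: sum_delta. Qed.

Lemma Om_row o i : \sum_j Om o i j = (o i != None)%:R.
Proof.
under eq_bigr do rewrite mxE.
case: (o i) => [l|] /=; last by rewrite big1.
by rewrite -[RHS](sum_delta _ l); apply: eq_bigr => j _; rewrite eq_sym.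
Qed.

Definition msum (D : 'M[R]_(n, k)) : R := \sum_(p : cell n k) D p.1 p.2.

Lemma sum_cells (M : 'M[R]_(n, k)) (F : cell n k -> R) :
  \sum_(p : cell n k) M p.1 p.2 * F p = \sum_i \sum_j M i j * F (i, j).
Proof. by rewrite pair_bigA /=; apply: eq_bigr => -[i j]. Qed.

Lemma sum_Vm jt (F : cell n k -> R) :
  \sum_(p : cell n k) Vm jt p.1 p.2 * F p = \sum_i F (i, jt i).
Proof.
rewrite sum_cells; apply: eq_bigr => i _.
rewrite (bigD1 (jt i)) //= mxE eqxx mul1r big1 ?addr0 // => j ji.
by rewrite mxE (negPf ji) mul0r.
Qed.

Lemma sum_Om o (F : cell n k -> R) :
  \sum_(p : cell n k) Om o p.1 p.2 * F p =
  \sum_i (if o i is Some j then F (i, j) else 0).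
Proof.
rewrite sum_cells; apply: eq_bigr => i _.
case oi: (o i) => [j|]; last by rewrite big1 // => j _; rewrite mxE oi mul0r.
rewrite (bigD1 j) //= mxE oi eqxx mul1r big1 ?addr0 // => l lj.
by rewrite mxE oi; case: eqP => [[jl]|]; [rewrite jl eqxx in lj|rewrite mul0r].
Qed.

Lemma in_Q_comb x o jt (a b : R) : 0 <= a -> 0 <= b -> mle 0 x ->
  (forall i, \sum_j x i j + a + b <= 1) -> in_Q (x + a *: Om o + b *: Vm jt).
Proof.
move=> a0 b0 x0 rows; split=> [i j|i].
  have := x0 i j; have := mle_scale a0 (Om_ge0 o) i j.
  have := mle_scale b0 (Vm_ge0 jt) i j; rewrite !mxE; lra.
rewrite !row_sum_lin Vm_row Om_row.
have Oi : ((o i != None)%:R : R) <= 1 by case: (o i != None).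
have := ler_wpM2l a0 Oi; have := rows i; lra.
Qed.

Lemma ML_Om (g : asg n k -> R) o : ML g (Om o) = g o.
Proof.
have wO m b : wt (Om o) m b = (o m == b)%:R.
  case: b => [j|] /=; first by rewrite mxE.
  by rewrite Om_row; case: (o m); rewrite /= ?subrr ?subr0.
rewrite /ML (bigD1 o) //= big1 ?addr0 => [|a ao].
  by rewrite /Wt big1 ?mulr1 // => m _; rewrite wO eqxx.
have [m am] : exists m, a m != o m.
  by apply/existsP; apply: contraR ao => /existsPn am; apply/eqP/ffunP => m; apply/eqP/negPn.
by rewrite /Wt (bigD1 m) //= wO eq_sym (negPf am) mul0r mulr0.
Qed.

Lemma greedy_rows N (s : nat -> 'M[R]_(n, k)) (jsel : nat -> 'I_n -> 'I_k) :
  s 0%N = 0 -> (forall t, (t < N)%N -> s t.+1 = s t + N%:R^-1 *: Vm (jsel t)) ->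
  forall t, (t <= N)%N -> mle 0 (s t) /\ forall i, \sum_j s t i j = t%:R / N%:R.
Proof.
move=> s0 sS; elim=> [|t IH] tN.
  by rewrite s0; split=> [|i]; [apply: mle_refl|rewrite mul0r big1 // => j _; rewrite mxE].
have [st0 rows] := IH (ltnW tN); rewrite sS //; split.
  by apply: mle_trans st0 _; apply/mle_addr/mle_scale/Vm_ge0; rewrite invr_ge0.
by move=> i; rewrite row_sum_lin rows Vm_row mulr1 -natr1 mulrDl mul1r.
Qed.
End Directions.
Arguments Vm {R n k}.
Arguments Om {R n k}.
Arguments Vm_ge0 {R n k}.
Arguments Om_ge0 {R n k}.
Arguments Vm_row {R n k}.
Arguments Om_row {R n k}.

Section ContinuousGreedy.
Variables (R : realType) (n k : nat) (g : asg n k -> R) (B : R).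
Hypotheses (g_ge0 : forall a, 0 <= g a) (g_leB : forall a, g a <= B)
  (g_mono : forall i j a, 0 <= Md i j g a)
  (g_DR : forall i j r l a, Md r l (Md i j g) a <= 0).

(* Nonnegative slopes: [ML g] is monotone on P. *)
Lemma ML_mono (x D : 'M[R]_(n, k)) : mle 0 x -> mle 0 D -> in_Q (x + D) -> ML g x <= ML g (x + D).
Proof.
move=> x0 D0 xDQ; apply: le_trans (@ML_incr_ge _ _ _ g (fun=> 0) x D D0 _).
  by rewrite big1 ?addr0 // => p _; rewrite mulr0.
by move=> p y xy yD; apply: ML_lb (in_Q_box x0 xy yD xDQ) _ => a; apply: g_mono.
Qed.

(* Nonpositive second differences: the slopes of [ML g] are antitone on P. *)
Lemma slope_anti (p : cell n k) (x z : 'M[R]_(n, k)) : mle 0 x -> mle x z -> in_Q z ->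
  ML (Md p.1 p.2 g) z <= ML (Md p.1 p.2 g) x.
Proof.
move=> x0 xz zQ; have ez : z = x + (z - x) by rewrite addrC subrK.
rewrite {1}ez.
apply: le_trans (@ML_incr_le _ _ _ (Md p.1 p.2 g) (fun=> 0) x (z - x) (mle_subr xz) _) _.
  move=> q y xy; rewrite -ez => yz.
  by apply: ML_ub (in_Q_box x0 xy yz zQ) _ => a; apply: g_DR.
by rewrite big1 ?addr0 // => q _; rewrite mulr0.
Qed.

(* Since [0 <= g <= B], second differences are at least [-2B]. *)
Lemma Md_Md_ge i j r l a : - (B + B) <= Md r l (Md i j g) a.
Proof.
rewrite /Md; have := g_ge0 (upd (upd a r (Some l)) i (Some j)).
have := g_leB (upd (upd a r (Some l)) i None).
have := g_leB (upd (upd a r None) i (Some j)).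
have := g_ge0 (upd (upd a r None) i None).
lra.
Qed.

Lemma slope_lip (p : cell n k) (x z : 'M[R]_(n, k)) : mle 0 x -> mle x z -> in_Q z ->
  ML (Md p.1 p.2 g) x - (B + B) * msum (z - x) <= ML (Md p.1 p.2 g) z.
Proof.
move=> x0 xz zQ; have ez : z = x + (z - x) by rewrite addrC subrK.
have -> : ML (Md p.1 p.2 g) x - (B + B) * msum (z - x) =
          ML (Md p.1 p.2 g) x + \sum_(q : cell n k) (z - x) q.1 q.2 * - (B + B).
  by rewrite /msum mulr_sumr -sumrN; congr (_ + _); apply: eq_bigr => q _; ring.
rewrite [in X in _ <= X]ez; apply: (@ML_incr_ge _ _ _ _ _ x (z - x) (mle_subr xz)).
move=> q y xy; rewrite -ez => yz.
by apply: ML_lb (in_Q_box x0 xy yz zQ) _ => a; apply: Md_Md_ge.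
Qed.

Lemma B_ge0 : 0 <= B.
Proof. exact: le_trans (g_ge0 [ffun=> None]) (g_leB _). Qed.

Lemma greedy_gain x jt d : 0 <= d -> mle 0 x -> in_Q (x + d *: Vm jt) ->
  ML g x + d * \sum_i ML (Md i (jt i) g) x - (B + B) * (d * n%:R) ^+ 2
  <= ML g (x + d *: Vm jt).
Proof.
move=> d0 x0 xVQ; have V0 := mle_scale d0 (Vm_ge0 jt).
pose U (p : cell n k) := ML (Md p.1 p.2 g) x - (B + B) * (d * n%:R).
apply: le_trans (@ML_incr_ge _ _ _ g U x _ V0 _).
  have -> : \sum_(p : cell n k) (d *: Vm jt) p.1 p.2 * U p =
            d * \sum_(p : cell n k) Vm jt p.1 p.2 * U p.
    by rewrite mulr_sumr; apply: eq_bigr => p _; rewrite mxE mulrA.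
  rewrite sum_Vm /U sumrB sumr_const card_ord -mulr_natr.
  lra.
move=> p y xy yVx; apply: le_trans (slope_lip p x0 xy (in_Q_box x0 xy yVx xVQ)).
rewrite lerD2l lerN2 ler_wpM2l ?addr_ge0 ?B_ge0 //.
have -> : d * n%:R = msum (d *: Vm jt).
  rewrite /msum (eq_bigr (fun q => d * (Vm jt q.1 q.2 * 1))) => [|q _].
    by rewrite -mulr_sumr sum_Vm sumr_const card_ord.
  by rewrite mxE mulr1.
by apply: ler_sum => q _; have := yVx q.1 q.2; rewrite !mxE; lra.
Qed.

(* Moving from [x + cO] to [x + (c + d)O] towards the assignment [o] gains at
   most [d] times the sum of the greedy slopes at [x]: slopes only decrease
   above [x], and at [x] each slope is dominated by the greedy one. *)
Lemma opt_loss x jt o (c d : R) : 0 <= c -> 0 <= d -> mle 0 x ->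
  in_Q (x + (c + d) *: Om o) ->
  (forall i j, ML (Md i j g) x <= ML (Md i (jt i) g) x) ->
  ML g (x + (c + d) *: Om o) <= ML g (x + c *: Om o) + d * \sum_i ML (Md i (jt i) g) x.
Proof.
move=> c0 d0 x0 xOQ greedy.
have xQ : in_Q x by apply: in_Q_box x0 (mle_refl x) _ xOQ; apply/mle_addr/mle_scale/Om_ge0; lra.
rewrite scalerDl addrA in xOQ *.
have xc : mle x (x + c *: Om o) by apply/mle_addr/mle_scale/Om_ge0.
pose U (p : cell n k) := ML (Md p.1 p.2 g) x.
apply: le_trans (@ML_incr_le _ _ _ g U _ _ (mle_scale d0 (Om_ge0 o)) _) _.
  move=> p y xcy yOQ; have xy := mle_trans xc xcy.
  exact: slope_anti x0 xy (in_Q_box x0 xy yOQ xOQ).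
rewrite lerD2l.
have -> : \sum_(p : cell n k) (d *: Om o) p.1 p.2 * U p =
          d * \sum_(p : cell n k) Om o p.1 p.2 * U p.
  by rewrite mulr_sumr; apply: eq_bigr => p _; rewrite mxE mulrA.
rewrite ler_wpM2l // sum_Om; apply: ler_sum => i _.
case: (o i) => [j|]; first exact: greedy.
by apply: ML_lb xQ _ => a; apply: g_mono.
Qed.

Lemma greedy_step x jt o (c d : R) : 0 <= c -> 0 <= d -> mle 0 x ->
  (forall i, \sum_j x i j + d + c <= 1) ->
  (forall i j, ML (Md i j g) x <= ML (Md i (jt i) g) x) ->
  ML g (x + (c + d) *: Om o) - ML g (x + d *: Vm jt + c *: Om o)
   <= ML g (x + d *: Vm jt) - ML g x + (B + B) * (d * n%:R) ^+ 2.
Proof.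
move=> c0 d0 x0 rows greedy.
have xVQ : in_Q (x + d *: Vm jt).
  have := @in_Q_comb _ _ _ x o jt 0 d (lexx 0) d0 x0.
  by rewrite scale0r addr0; apply => i; have := rows i; lra.
have xOQ : in_Q (x + (c + d) *: Om o).
  have := @in_Q_comb _ _ _ x o jt (c + d) 0 (addr_ge0 c0 d0) (lexx 0) x0.
  by rewrite scale0r addr0; apply => i; have := rows i; lra.
have xOVQ : in_Q (x + c *: Om o + d *: Vm jt).
  by apply: in_Q_comb => // i; have := rows i; lra.
have gain := greedy_gain d0 x0 xVQ.
have loss := opt_loss c0 d0 x0 xOQ greedy.
have mono : ML g (x + c *: Om o) <= ML g (x + d *: Vm jt + c *: Om o).
  rewrite addrAC; apply: ML_mono (mle_scale d0 (Vm_ge0 jt)) xOVQ.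
  by apply: mle_trans x0 _; apply/mle_addr/mle_scale/Om_ge0.
lra.
Qed.

(* Potential argument: compare the greedy run [s t] with the path
   [y t = s t + (1 - t/N) Om o]; over the [N] steps the losses of [y] are
   paid by the gains of [s], which yields the 1/2 guarantee up to
   [B n^2 / N]. *)
Lemma greedy_bound N (s : nat -> 'M[R]_(n, k)) (jsel : nat -> 'I_n -> 'I_k) o :
  (0 < N)%N -> s 0%N = 0 ->
  (forall t, (t < N)%N -> forall i j,
     ML (Md i j g) (s t) <= ML (Md i (jsel t i) g) (s t)) ->
  (forall t, (t < N)%N -> s t.+1 = s t + N%:R^-1 *: Vm (jsel t)) ->
  g o + ML g 0 <= 2 * ML g (s N) + 2 * (B * n%:R ^+ 2 / N%:R).
Proof.
move=> N0 s0 greedy sS.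
set d := N%:R^-1 : R in sS *; set E := (B + B) * (d * n%:R) ^+ 2.
pose y t := s t + (1 - t%:R * d) *: Om o.
have d0 : 0 <= d by rewrite invr_ge0.
have Nd : N%:R * d = 1 by rewrite mulfV // pnatr_eq0 -lt0n.
have potential t : (t <= N)%N -> g o + ML g (s 0%N) <= ML g (s t) + ML g (y t) + t%:R * E.
  elim: t => [|t IH] tN.
    by rewrite /y s0 mul0r subr0 scale1r add0r ML_Om; lra.
  have [st0 rows] := greedy_rows s0 sS (ltnW tN).
  have c0 : 0 <= 1 - t.+1%:R * d.
    have : t.+1%:R * d <= N%:R * d by apply: ler_wpM2r => //; rewrite ler_nat.
    by rewrite Nd subr_ge0.
  have step := greedy_step o c0 d0 st0 _ (greedy t tN).
  have IHt := IH (ltnW tN).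
  have ey : y t = s t + ((1 - t.+1%:R * d) + d) *: Om o.
    by rewrite /y -natr1; congr (_ + _ *: _); ring.
  have ey' : y t.+1 = s t + d *: Vm (jsel t) + (1 - t.+1%:R * d) *: Om o.
    by rewrite /y sS.
  rewrite ey in IHt; rewrite ey' sS //.
  have rows' i : \sum_j s t i j + d + (1 - t.+1%:R * d) <= 1.
    by rewrite rows -/d -natr1; lra.
  have := step rows'; move: IHt; rewrite -/E -!natr1; lra.
have := potential N (leqnn N).
rewrite /y Nd subrr scale0r addr0 s0.
have -> : N%:R * E = 2 * (B * n%:R ^+ 2 * d).
  by rewrite /E /d; field; rewrite pnatr_eq0 -lt0n.
lra.
Qed.
End ContinuousGreedy.

Lemma small_for_large_N (R : realType) (C eps : R) : 0 < eps ->
  exists N0 : nat, forall N : nat, (0 < N)%N -> (N0 <= N)%N -> C / N%:R <= eps.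
Proof.
move=> eps0; exists (Num.truncn (C / eps)).+1 => N N0 N0N.
have N0' : (0 : R) < N%:R by rewrite ltr0n.
have : C / eps < N%:R by apply: lt_le_trans (truncnS_gt _) _; rewrite ler_nat.
by rewrite ltr_pdivrMr // ler_pdivrMr // mulrC => /ltW.
Qed.

Unset Implicit Arguments.

(* Feasibility follows from the row sums of the run; the guarantee from
   [greedy_bound] applied to [gf f] with [B = OPT f], an optimal assignment
   and [F(0) >= 0]. *)
Theorem mainTheorem6 (R : realType) (n k : nat) (f : ktuple n k -> R) :
  (2 <= k)%N ->
  (forall S, 0 <= f S) -> k_monotone f -> k_submodular f ->
  (forall (N : nat) (s : nat -> 'M[R]_(n, k)) (jsel : nat -> 'I_n -> 'I_k),
      (0 < N)%N -> greedy_run (multilinear_ext f) N s jsel ->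
      in_P (s N) /\ (forall i, \sum_(j < k) s N i j = 1)) /\
  (forall eps : R, 0 < eps -> exists N0 : nat, forall (N : nat)
      (s : nat -> 'M[R]_(n, k)) (jsel : nat -> 'I_n -> 'I_k),
      (0 < N)%N -> (N0 <= N)%N -> greedy_run (multilinear_ext f) N s jsel ->
      multilinear_ext f (s N) >= OPT f / 2 - eps).
Proof.
move=> _ f0 fmono fsub; split.
  move=> N s jsel N0 [s0 _ sS].
  have [sN0 rows] := greedy_rows s0 sS (leqnn N).
  have rows1 i : \sum_j s N i j = 1 by rewrite rows mulfV // pnatr_eq0 -lt0n.
  split=> //; apply: in_QP; split=> [i j|i]; last by rewrite rows1.
  by have := sN0 i j; rewrite mxE.
move=> eps eps0; have [N0 small] := small_for_large_N (OPT f * n%:R ^+ 2) eps0.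
exists N0 => N s jsel N0' N0N [s0 greedy sS]; rewrite ML_eq.
have greedy' t (tN : (t < N)%N) i j : ML (Md i j (gf f)) (s t) <= ML (Md i (jsel t i) (gf f)) (s t).
  by rewrite -!D_ML -ML_eq; apply: greedy.
have [best best_opt] := OPT_attained f0.
have := @greedy_bound _ _ _ (gf f) (OPT f) (fun a => f0 _) (gf_le_OPT f) (gf_mono fmono) (gf_DR fsub)
  N s jsel best N0' s0 greedy' sS.
have : 0 <= ML (gf f) 0.
  apply: ML_lb => [|a]; last exact: f0.
  by split=> [i j|i]; rewrite ?mxE // big1 // => j _; rewrite mxE.
have := small N N0' N0N; lra.
Qed.
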